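(* For $n\geq 3$, the group $\Gamma_2(VP_n)/\Gamma_3(VP_n)$ is a free abelian group of rank $n(n-1)(2n-3)/2$.
   Context: The virtual pure braid group $VP_n$ is the group with generators $\lambda_{k,l}$, $1\le k\neq l\le n$, and defining relations $\lambda_{i,j}\lambda_{k,l}=\lambda_{k,l}\lambda_{i,j}$ and $\lambda_{k,i}\lambda_{k,j}\lambda_{i,j}=\lambda_{i,j}\lambda_{k,j}\lambda_{k,i}$, where distinct letters stand for distinct indices. (Equivalently, it is the kernel of the homomorphism from the virtual braid group $VB_n$ to $S_n$ sending both $\sigma_i$ and $\rho_i$ to the transposition $(i\ i{+}1)$.) For a group $G$, $\Gamma_1(G)=G$, $\Gamma_i(G)=[\Gamma_{i-1}(G),G]$. *)

(* The virtual pure braid group VP_n is encoded by its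
   presentation: words in the generators lambda_{k,l} (k <> l) and their
   inverses, modulo the congruence generated by free cancellation and the
   defining relators. *)
From mathcomp Require Import all_boot all_algebra.
From Stdlib Require Import Relation_Operators.
Set Implicit Arguments. Unset Strict Implicit. Unset Printing Implicit Defensive.
Import GRing.Theory.
Local Open Scope ring_scope.

(* generators lambda_{k,l}, 1 <= k <> l <= n, indexed here by 'I_n *)
Definition vgen (n : nat) := {p : 'I_n * 'I_n | p.1 != p.2}.

(* letters: (generator, true) = generator, (generator, false) = its inverse *)
Definition vletter (n : nat) := (vgen n * bool)%type.
Definition vword (n : nat) := seq (vletter n).

Definition linv n (x : vletter n) : vletter n := (x.1, ~~ x.2).
Definition winv n (w : vword n) : vword n := rev (map (@linv n) w).

Definition pos n (x : vgen n) : vletter n := (x, true).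
Definition neg n (x : vgen n) : vletter n := (x, false).

(* defining relators (left side times inverse of right side) *)
Definition vrelator n (r : vword n) : Prop :=
  (* lambda_{ij} lambda_{kl} = lambda_{kl} lambda_{ij}, i,j,k,l distinct *)
  (exists x y : vgen n,
      uniq [:: (val x).1; (val x).2; (val y).1; (val y).2] /\
      r = [:: pos x; pos y; neg x; neg y])
  \/
  (* lambda_{ki} lambda_{kj} lambda_{ij} = lambda_{ij} lambda_{kj} lambda_{ki},
     k,i,j distinct *)
  (exists x y z : vgen n,
      uniq [:: (val x).1; (val x).2; (val y).2] /\
      (val y).1 = (val x).1 /\ (val z).1 = (val x).2 /\ (val z).2 = (val y).2 /\
      r = [:: pos x; pos y; pos z; neg x; neg y; neg z]).

Definition vstep n (u v : vword n) : Prop :=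
  exists a b s : vword n, u = a ++ s ++ b /\ v = a ++ b /\
    ((exists x : vletter n, s = [:: x; linv x]) \/ vrelator s).

Definition veq n : vword n -> vword n -> Prop := clos_refl_sym_trans _ (@vstep n).

Definition vcomm n (a b : vword n) : vword n := winv a ++ winv b ++ a ++ b.

Inductive vgenerated n (S : vword n -> Prop) : vword n -> Prop :=
| vgen_S w : S w -> vgenerated S w
| vgen_nil : vgenerated S [::]
| vgen_mul u v : vgenerated S u -> vgenerated S v -> vgenerated S (u ++ v)
| vgen_inv u : vgenerated S u -> vgenerated S (winv u)
| vgen_eq u v : veq u v -> vgenerated S u -> vgenerated S v.

(* lower central series: Gamma 1 = G, Gamma (i+1) = [Gamma i, G]
   (Gamma 0 is also set to G) *)
Fixpoint Gamma n (i : nat) : vword n -> Prop :=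
  match i with
  | 0 => fun _ => True
  | j.+1 => match j with
            | 0 => fun _ => True
            | _ => vgenerated (fun w => exists a b, @Gamma n j a /\ w = vcomm a b)
            end
  end.

(* Gamma_2 / Gamma_3 is isomorphic to Z^r: a homomorphism on Gamma_2 onto
   Z^r whose kernel is exactly Gamma_3 *)
Definition G2modG3_free_of_rank n (r : nat) : Prop :=
  exists f : vword n -> 'rV[int]_r,
    (forall u v, @Gamma n 2 u -> @Gamma n 2 v -> f (u ++ v) = f u + f v) /\
    (forall z : 'rV[int]_r, exists u, @Gamma n 2 u /\ f u = z) /\
    (forall u, @Gamma n 2 u -> (f u = 0 <-> @Gamma n 3 u)).

(* Write l_ij for lambda_{i,j}.  Modulo Gamma_3 commutators are bilinear, so
   Gamma_2/Gamma_3 is generated by the classes of the commutators [l_g, l_h] of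
   generators.  The commuting relators kill [l_ij, l_kl] for disjoint indices, and the
   triangle relator l_ki l_kj l_ij = l_ij l_kj l_ki gives
   [l_ij, l_kj] [l_ij, l_ki] [l_kj, l_ki] = 1.  Hence Gamma_2/Gamma_3 is spanned by the
   classes of [l_ab, l_ba] (a < b), [l_ki, l_kj] and [l_ik, l_jk] (i < j, k outside
   {i, j}): C(n,2) + 2 C(n,2) (n-2) = n(n-1)(2n-3)/2 elements.
   They are independent: for beta on pairs of generators, the second order sum
   w |-> sum_{p<q} e_p e_q beta(x_p, x_q) over the letters x_p^e_p of w is additive on
   words with trivial abelianization, maps [l_g, l_h] to beta(g,h) - beta(h,g) and
   vanishes on Gamma_3; it respects the relators as soon as beta(g,h) - beta(h,g)
   vanishes on disjoint pairs and satisfies the triangle identity.  The coordinate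
   functions of the spanning set are of this form, which gives the dual basis. *)

From mathcomp Require Import all_boot all_algebra zify.
From Stdlib Require Import Relation_Operators Setoid Morphisms.
Set Implicit Arguments. Unset Strict Implicit. Unset Printing Implicit Defensive.
Import GRing.Theory.

Section Words.
Variable n : nat.
Implicit Types (x : vletter n) (u v w a b g s : vword n).

Lemma linvK : involutive (@linv n).
Proof. by case=> g e; rewrite /linv /= negbK. Qed.

Lemma winv_cat u v : winv (u ++ v) = winv v ++ winv u.
Proof. by rewrite /winv map_cat rev_cat. Qed.

Lemma winv_cons x u : winv (x :: u) = winv u ++ [:: linv x].
Proof. by rewrite /winv /= rev_cons cats1. Qed.

Lemma winvK : involutive (@winv n).
Proof. by elim=> //= x u IH; rewrite winv_cons winv_cat IH /= linvK. Qed.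

Global Instance veq_equiv : Equivalence (@veq n).
Proof. split; [exact: rst_refl | exact: rst_sym | exact: rst_trans]. Qed.

Lemma veq_refl u : veq u u. Proof. exact: rst_refl. Qed.
#[local] Hint Resolve veq_refl : core.

Lemma veq_ctx a b u v : veq u v -> veq (a ++ u ++ b) (a ++ v ++ b).
Proof.
elim=> {u v} [u v [a' [b' [s [-> [-> Hs]]]]]|u|u v _ IH|u v w _ IH1 _ IH2].
- by apply: rst_step; exists (a ++ a'), (b' ++ b), s; rewrite -!catA.
- reflexivity.
- by symmetry.
- by transitivity (a ++ v ++ b).
Qed.

Global Instance cat_veq : Proper (@veq n ==> @veq n ==> @veq n) cat.
Proof.
move=> u u' Hu v v' Hv; transitivity (u' ++ v); first exact: (veq_ctx [::] v Hu).
by have := veq_ctx u' [::] Hv; rewrite !cats0.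
Qed.

Global Instance cons_veq : Proper (eq ==> @veq n ==> @veq n) cons.
Proof. by move=> x _ <- u v Huv; apply: (cat_veq (veq_refl [:: x]) Huv). Qed.

Lemma veq_cancel x b : veq (x :: linv x :: b) b.
Proof. by apply: rst_step; exists [::], b, [:: x; linv x]; split; [|split; [|left; exists x]]. Qed.

Lemma veq_relator s : vrelator s -> veq s [::].
Proof. by move=> Hs; apply: rst_step; exists [::], [::], s; rewrite cats0; split; [|split; [|right]]. Qed.

Lemma catKVw u b : veq (u ++ winv u ++ b) b.
Proof.
elim: u b => [|x u IH] b; first reflexivity.
rewrite winv_cons -catA /= IH; exact: veq_cancel.
Qed.

Lemma catKw u b : veq (winv u ++ u ++ b) b.
Proof. by have := catKVw (winv u) b; rewrite winvK. Qed.

Lemma catwV u : veq (u ++ winv u) [::].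
Proof. by have := catKVw u [::]; rewrite cats0. Qed.

Lemma catVw u : veq (winv u ++ u) [::].
Proof. by have := catKw u [::]; rewrite cats0. Qed.

Lemma veq_catV1 u v : veq (u ++ winv v) [::] -> veq u v.
Proof. by move=> H; rewrite -[u]cats0 -(catVw v) catA H. Qed.

Lemma vcommC u v : veq (u ++ v) (v ++ u ++ vcomm u v).
Proof. by rewrite /vcomm !catKVw. Qed.

Lemma vcomm_commute u v : veq (u ++ v) (v ++ u) -> veq (vcomm u v) [::].
Proof. by move=> Huv; rewrite /vcomm catA Huv -catA catKw catVw. Qed.

Definition wconj g w := winv g ++ w ++ g.

Global Instance wconj_veq g : Proper (@veq n ==> @veq n) (wconj g).
Proof. by move=> u v Huv; rewrite /wconj Huv. Qed.

Lemma wconj_cat g u v : veq (wconj g (u ++ v)) (wconj g u ++ wconj g v).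
Proof. by rewrite /wconj -!catA catKVw. Qed.

Lemma wconj_winv g u : wconj g (winv u) = winv (wconj g u).
Proof. by rewrite /wconj !winv_cat winvK catA. Qed.

Lemma wconj_vcomm g a b : veq (wconj g (vcomm a b)) (vcomm (wconj g a) (wconj g b)).
Proof. by rewrite /wconj /vcomm !winv_cat !winvK -!catA !catKVw. Qed.

Lemma vgenerated_wconj (S : vword n -> Prop) :
  (forall g w, S w -> vgenerated S (wconj g w)) ->
  forall g w, vgenerated S w -> vgenerated S (wconj g w).
Proof.
move=> HS g w; elim=> {w} [w /HS //||u v _ IHu _ IHv|u _ IH|u v Huv _ IH].
- by apply: vgen_eq (vgen_nil S); rewrite /wconj catVw.
- by apply: vgen_eq (vgen_mul IHu IHv); rewrite wconj_cat.
- by rewrite wconj_winv; apply: vgen_inv.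
- by apply: vgen_eq IH; rewrite Huv.
Qed.

End Words.

#[global] Hint Resolve veq_refl : core.

Section ModuloGamma3.
Variable n : nat.
Implicit Types (x y : vletter n) (u v w a b : vword n).

Definition G2 : vword n -> Prop :=
  vgenerated (fun w => exists a b, @Gamma n 1 a /\ w = vcomm a b).
Definition G3 : vword n -> Prop :=
  vgenerated (fun w => exists a b, G2 a /\ w = vcomm a b).

Lemma Gamma2E : @Gamma n 2 = G2. Proof. by []. Qed.
Lemma Gamma3E : @Gamma n 3 = G3. Proof. by []. Qed.

Lemma G2_vcomm a b : G2 (vcomm a b).
Proof. by apply: vgen_S; exists a, b. Qed.

Lemma G3_vcomm a b : G2 a -> G3 (vcomm a b).
Proof. by move=> Ha; apply: vgen_S; exists a, b. Qed.

Lemma G2_wconj g w : G2 w -> G2 (wconj g w).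
Proof.
apply: vgenerated_wconj => {}g _ [a [b [_ ->]]].
by apply: vgen_eq (G2_vcomm (wconj g a) (wconj g b)); rewrite wconj_vcomm.
Qed.

Lemma G3_wconj g w : G3 w -> G3 (wconj g w).
Proof.
apply: vgenerated_wconj => {}g _ [a [b [Ha ->]]].
by apply: vgen_eq (G3_vcomm (wconj g b) (G2_wconj g Ha)); rewrite wconj_vcomm.
Qed.

Lemma G3_G2 w : G3 w -> G2 w.
Proof.
elim=> {w} [_ [a [b [_ ->]]]||u v _ Hu _ Hv|u _ Hu|u v Huv _ Hu].
- exact: G2_vcomm.
- exact: vgen_nil.
- exact: vgen_mul.
- exact: vgen_inv.
- exact: vgen_eq Huv Hu.
Qed.

Lemma G2_flatten (l : seq (vword n)) : (forall w, w \in l -> G2 w) -> G2 (flatten l).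
Proof.
elim: l => [|w l IH] Hl /=; first exact: vgen_nil.
by apply: vgen_mul; [apply: Hl; rewrite inE eqxx | apply: IH => v Hv; apply: Hl; rewrite inE Hv orbT].
Qed.

Definition eqG3 u v := G3 (u ++ winv v).

Lemma eqG3_refl u : eqG3 u u.
Proof. by apply: vgen_eq (vgen_nil _); rewrite catwV. Qed.
#[local] Hint Resolve eqG3_refl : core.

Global Instance eqG3_equiv : Equivalence eqG3.
Proof.
split; first exact: eqG3_refl.
- by move=> u v /vgen_inv; rewrite /eqG3 winv_cat winvK.
- move=> u v w Huv Hvw; apply: vgen_eq (vgen_mul Huv Hvw).
  by rewrite -catA catKw.
Qed.

Lemma eqG3_G3 u : G3 u <-> eqG3 u [::].
Proof. by rewrite /eqG3 cats0. Qed.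

Lemma eqG3_winvl u v : G3 (winv v ++ u) -> eqG3 u v.
Proof.
move=> /(G3_wconj (winv v)); apply: vgen_eq.
by rewrite /wconj winvK -!catA catKVw.
Qed.

Global Instance veq_eqG3 : subrelation (@veq n) eqG3.
Proof. by move=> u v Huv; apply: vgen_eq (eqG3_refl v); rewrite Huv. Qed.

Lemma eqG3_catl a u v : eqG3 u v -> eqG3 (a ++ u) (a ++ v).
Proof.
move=> /(G3_wconj (winv a)); apply: vgen_eq.
by rewrite /wconj winvK winv_cat !catA.
Qed.

Lemma eqG3_catr b u v : eqG3 u v -> eqG3 (u ++ b) (v ++ b).
Proof. by apply: vgen_eq; rewrite winv_cat -!catA catKVw. Qed.

Global Instance cat_eqG3 : Proper (eqG3 ==> eqG3 ==> eqG3) cat.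
Proof.
move=> u u' Hu v v' Hv; transitivity (u' ++ v); first exact: eqG3_catr.
exact: eqG3_catl.
Qed.

Global Instance winv_eqG3 : Proper (eqG3 ==> eqG3) (@winv n).
Proof. by move=> u v /vgen_inv; rewrite winv_cat winvK => Huv; apply: eqG3_winvl; rewrite winvK. Qed.

Lemma eqG3_cancel_l a u v : eqG3 (a ++ u) (a ++ v) -> eqG3 u v.
Proof. by move=> H; rewrite -(catKw a u) -(catKw a v) H. Qed.

Lemma eqG3_cat_nil u v : eqG3 (u ++ v) [::] -> eqG3 v (winv u).
Proof. by move=> H; apply: (@eqG3_cancel_l u); rewrite H catwV. Qed.

Lemma eqG3_cat3_nil u v w : eqG3 (u ++ v ++ w) [::] -> eqG3 v (winv u ++ winv w).
Proof.
move=> H; transitivity (winv u ++ (u ++ v ++ w) ++ winv w); last by rewrite H.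
by rewrite -!catA catKw catwV cats0.
Qed.

Lemma G2_central w g : G2 w -> eqG3 (w ++ g) (g ++ w).
Proof. by move=> Hw; apply: eqG3_winvl; rewrite winv_cat -!catA; apply: G3_vcomm. Qed.

Lemma G2_wconj_eqG3 w g : G2 w -> eqG3 (wconj g w) w.
Proof. by move=> Hw; rewrite /wconj (G2_central g Hw) catKw. Qed.

Lemma vcomm_catl a1 a2 b : eqG3 (vcomm (a1 ++ a2) b) (vcomm a1 b ++ vcomm a2 b).
Proof.
have -> : veq (vcomm (a1 ++ a2) b) (wconj a2 (vcomm a1 b) ++ vcomm a2 b).
  by rewrite /wconj /vcomm !winv_cat -!catA catKVw catKVw.
by rewrite G2_wconj_eqG3 //; apply: G2_vcomm.
Qed.

Lemma vcomm_catr a b1 b2 : eqG3 (vcomm a (b1 ++ b2)) (vcomm a b2 ++ vcomm a b1).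
Proof.
have -> : veq (vcomm a (b1 ++ b2)) (vcomm a b2 ++ wconj b2 (vcomm a b1)).
  by rewrite /wconj /vcomm !winv_cat -!catA catKVw catKVw.
by rewrite G2_wconj_eqG3 //; apply: G2_vcomm.
Qed.

Lemma vcomm_linvl x b : eqG3 (vcomm [:: linv x] b) (winv (vcomm [:: x] b)).
Proof.
apply: eqG3_cat_nil; rewrite -vcomm_catl /vcomm /= linvK.
by rewrite !veq_cancel catVw.
Qed.

Lemma vcomm_linvr a y : eqG3 (vcomm a [:: linv y]) (winv (vcomm a [:: y])).
Proof.
apply: eqG3_cat_nil; rewrite -vcomm_catr /vcomm /=.
have Hy := veq_cancel (linv y); rewrite linvK in Hy.
by rewrite linvK !Hy cats0 catVw.
Qed.

Lemma eqG3_rev3 u v w :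
  eqG3 (w ++ v ++ u) (u ++ v ++ w ++ vcomm w v ++ vcomm w u ++ vcomm v u).
Proof.
move: (vcommC v u) (vcommC w u) (vcommC w v) (G2_central v (G2_vcomm w u)).
move: (vcomm v u) (vcomm w u) (vcomm w v) => cvu cwu cwv Hvu Hwu Hwv Hcen.
rewrite Hvu catA Hwu -!catA [cwu ++ _]catA Hcen -catA.
by rewrite [w ++ v ++ _]catA Hwv -!catA.
Qed.

Definition gcomm (g h : vgen n) := vcomm [:: pos g] [:: pos h].

Lemma G2_gcomm g h : G2 (gcomm g h).
Proof. exact: G2_vcomm. Qed.

Lemma winv_gcomm g h : winv (gcomm g h) = gcomm h g.
Proof. by rewrite /gcomm /vcomm !winv_cat !winvK -!catA. Qed.

Lemma vcomm_nill b : veq (vcomm [::] b) [::].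
Proof. exact: catVw. Qed.

Lemma vcomm_nilr a : veq (vcomm a [::]) [::].
Proof. by rewrite /vcomm /= cats0 catVw. Qed.

End ModuloGamma3.

#[global] Hint Resolve eqG3_refl : core.

Section WordPowers.
Local Open Scope ring_scope.
Variable n : nat.
Implicit Types (w : vword n) (k : int).

Definition wpow w (k : int) : vword n :=
  match k with
  | Posz m => flatten (nseq m w)
  | Negz m => flatten (nseq m.+1 (winv w))
  end.

Lemma wpow_addSl w k : veq (wpow w (1 + k)) (w ++ wpow w k).
Proof.
case: k => [m|[|m]]; first by [].
- by rewrite /= cats0 catwV.
- have -> : 1 + Negz m.+1 = Negz m by rewrite !NegzE; lia.
  by rewrite [wpow w (Negz m.+1)]/= catKVw.
Qed.

Lemma wpow_addNl w k : veq (wpow w (-1 + k)) (winv w ++ wpow w k).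
Proof. by have := wpow_addSl w (-1 + k); rewrite addrA subrr add0r => ->; rewrite catKw. Qed.

Lemma wpow_add w k1 k2 : veq (wpow w (k1 + k2)) (wpow w k1 ++ wpow w k2).
Proof.
elim/int_rect: k1 => [|m IH|m IH]; first by rewrite add0r.
- have -> : (m.+1)%:Z + k2 = 1 + (m%:Z + k2) by lia.
  by rewrite wpow_addSl IH catA.
- have -> : - (m.+1)%:Z + k2 = -1 + (- m%:Z + k2) by lia.
  have -> : - (m.+1)%:Z = -1 + - m%:Z by lia.
  by rewrite !wpow_addNl IH catA.
Qed.

Lemma G2_wpow w k : G2 w -> G2 (wpow w k).
Proof.
by move=> Hw; case: k => m; apply: G2_flatten => x /nseqP[-> _] //; apply: vgen_inv.
Qed.

End WordPowers.

Section Abelianization.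
Local Open Scope ring_scope.
Variable n : nat.
Implicit Types (F : vgen n -> int) (x : vletter n) (u v w a b : vword n).

Definition abel F w : int := \sum_(x <- w) (if x.2 then F x.1 else - F x.1).

Definition abel_trivial w := forall F, abel F w = 0.

Lemma abel_nil F : abel F [::] = 0.
Proof. exact: big_nil. Qed.

Lemma abel_cons F x w :
  abel F (x :: w) = (if x.2 then F x.1 else - F x.1) + abel F w.
Proof. exact: big_cons. Qed.

Lemma abel_cat F u v : abel F (u ++ v) = abel F u + abel F v.
Proof. exact: big_cat. Qed.

Lemma abel_winv F u : abel F (winv u) = - abel F u.
Proof.
rewrite /abel /winv big_rev big_map -sumrN.
by apply: eq_bigr => -[g []] _ /=; rewrite ?opprK.
Qed.

Lemma abel_trivial_cat u v : abel_trivial u -> abel_trivial v -> abel_trivial (u ++ v).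
Proof. by move=> Hu Hv F; rewrite abel_cat Hu Hv addr0. Qed.

Lemma abel_trivial_winv u : abel_trivial u -> abel_trivial (winv u).
Proof. by move=> Hu F; rewrite abel_winv Hu oppr0. Qed.

Lemma abel_trivial_vcomm a b : abel_trivial (vcomm a b).
Proof. by move=> F; rewrite /vcomm !abel_cat !abel_winv; lia. Qed.

Lemma abel_trivial_vstep s :
  (exists x, s = [:: x; linv x]) \/ vrelator s -> abel_trivial s.
Proof.
move=> Hs F; rewrite /abel.
case: Hs => [[[g []] ->]|[[x [y [_ ->]]]|[x [y [z [_ [_ [_ [_ ->]]]]]]]]];
  rewrite !big_cons big_nil /=; lia.
Qed.

Lemma abel_veq F u v : veq u v -> abel F u = abel F v.
Proof.
elim=> {u v} [u v [a [b [s [-> [-> Hs]]]]]|//|u v _ -> //|u v w _ -> _ -> //].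
by rewrite !abel_cat (abel_trivial_vstep Hs) add0r.
Qed.

Lemma G2_abel_trivial u : G2 u -> abel_trivial u.
Proof.
elim=> {u} [_ [a [b [_ ->]]]||u v _ Hu _ Hv|u _ Hu|u v Huv _ Hu].
- exact: abel_trivial_vcomm.
- by move=> F; rewrite /abel big_nil.
- exact: abel_trivial_cat.
- exact: abel_trivial_winv.
- by move=> F; rewrite -(abel_veq F Huv).
Qed.

End Abelianization.

Section SecondOrderInvariant.
Local Open Scope ring_scope.
Variable n : nat.
Variable beta : vgen n -> vgen n -> int.
Implicit Types (x : vletter n) (u v w a b s : vword n).

(* For w = x_1^e_1 ... x_m^e_m, quad w = sum_{p<q} e_p e_q beta x_p x_q. *)
Fixpoint quad w : int :=
  if w is x :: w' then
    (if x.2 then abel (beta x.1) w' else - abel (beta x.1) w') + quad w'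
  else 0.

Definition cross u v : int := abel (fun g => abel (beta g) v) u.

Lemma quad_cat u v : quad (u ++ v) = quad u + quad v + cross u v.
Proof.
rewrite /cross; elim: u => [|[g e] u IH] /=; first by rewrite abel_nil; lia.
rewrite IH abel_cat abel_cons; case: e => /=; lia.
Qed.

Lemma cross_trivial_l u v : abel_trivial u -> cross u v = 0.
Proof. exact. Qed.

Lemma cross_trivial_r u v : abel_trivial v -> cross u v = 0.
Proof.
move=> Hv; rewrite /cross; elim: u => [|[g e] u IH]; first exact: abel_nil.
by rewrite abel_cons IH Hv; case: e; rewrite ?oppr0.
Qed.

Lemma cross_catr u v w : cross u (v ++ w) = cross u v + cross u w.
Proof.
rewrite /cross; elim: u => [|[g e] u IH]; first by rewrite !abel_nil addr0.
by rewrite !abel_cons IH abel_cat; case: e => /=; lia.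
Qed.

Hypothesis beta_diag : forall g, beta g g = 0.
Hypothesis quad_relator : forall s, vrelator s -> quad s = 0.

Lemma quad_vstep u v : vstep u v -> quad u = quad v.
Proof.
case=> a [b [s [-> [-> Hs]]]]; have Zs := abel_trivial_vstep Hs.
have Qs : quad s = 0.
  case: Hs => [[[g e] ->]|/quad_relator //].
  by rewrite /= abel_cons abel_nil beta_diag; case: e => /=; lia.
by rewrite !quad_cat Qs cross_catr (cross_trivial_l _ Zs) (cross_trivial_r _ Zs); lia.
Qed.

Lemma quad_veq u v : veq u v -> quad u = quad v.
Proof. by elim=> {u v} [u v /quad_vstep|//|u v _ ->|u v w _ -> _ ->]. Qed.

Lemma quad_cat_trivial u v : abel_trivial u -> quad (u ++ v) = quad u + quad v.
Proof. by move=> Hu; rewrite quad_cat cross_trivial_l ?addr0. Qed.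

Lemma quad_winv u : abel_trivial u -> quad (winv u) = - quad u.
Proof.
move=> Hu; apply/eqP; rewrite -addr_eq0 -quad_cat_trivial; last exact: abel_trivial_winv.
by rewrite (quad_veq (catVw u)).
Qed.

Lemma quad_wconj a b : abel_trivial a -> quad (wconj b a) = quad a.
Proof.
move=> Ha; have := quad_veq (catVw b).
rewrite /wconj !quad_cat cross_catr (cross_trivial_l _ Ha) (cross_trivial_r _ Ha) /=; lia.
Qed.

Lemma quad_G3 u : G3 u -> quad u = 0.
Proof.
have G3_trivial w : G3 w -> abel_trivial w by move/G3_G2/G2_abel_trivial.
elim=> {u} [_ [a [b [/G2_abel_trivial Ha ->]]]||u v Hu IHu _ IHv|u Hu IH|u v Huv _ IH].
- rewrite /vcomm quad_cat_trivial; last exact: abel_trivial_winv.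
  by rewrite -/(wconj b a) quad_wconj // quad_winv // addNr.
- by [].
- by rewrite quad_cat_trivial ?IHu ?IHv ?addr0 //; apply: G3_trivial.
- by rewrite quad_winv ?IH ?oppr0 //; apply: G3_trivial.
- by rewrite -(quad_veq Huv).
Qed.

End SecondOrderInvariant.

Section RelatorForms.
Local Open Scope ring_scope.
Variable n : nat.
Variable D : vgen n -> vgen n -> int.
Implicit Types (g h : vgen n) (s : vword n).

Hypothesis D_anti : forall g h, D h g = - D g h.
Hypothesis D_commuting : forall g h,
  uniq [:: (val g).1; (val g).2; (val h).1; (val h).2] -> D g h = 0.
Hypothesis D_triangle : forall x y z,
  uniq [:: (val x).1; (val x).2; (val y).2] ->
  (val y).1 = (val x).1 -> (val z).1 = (val x).2 -> (val z).2 = (val y).2 ->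
  D x y + D x z + D y z = 0.

Definition upper g h : int := if (enum_rank g < enum_rank h)%N then D g h else 0.

Lemma upper_diag g : upper g g = 0.
Proof. by rewrite /upper ltnn. Qed.

Lemma upper_anti g h : upper g h - upper h g = D g h.
Proof.
have := D_anti h g; have := D_anti g g.
by rewrite /upper; case: ltngtP => [_|_|/val_inj/enum_rank_inj ->]; lia.
Qed.

Lemma quad_upper_relator s : vrelator s -> quad upper s = 0.
Proof.
case=> [[x [y [Hu ->]]]|[x [y [z [Hu [Ey [Ez1 [Ez2 ->]]]]]]]].
- have := D_commuting Hu; have := upper_anti x y.
  rewrite /= !abel_cons abel_nil /= !upper_diag; lia.
- have := D_triangle Hu Ey Ez1 Ez2.
  have := upper_anti x y; have := upper_anti x z; have := upper_anti y z.
  rewrite /= !abel_cons abel_nil /= !upper_diag; lia.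
Qed.

Lemma quad_upper_gcomm g h : quad upper (gcomm g h) = D g h.
Proof.
have := upper_anti g h.
rewrite /gcomm /vcomm /= !abel_cons abel_nil /= !upper_diag; lia.
Qed.

End RelatorForms.

Lemma card_pred_pair_dep (T1 T2 : finType) (P : pred T1) (Q : T1 -> pred T2) :
  #|[pred t : T1 * T2 | P t.1 && Q t.1 t.2]| = \sum_(x | P x) #|Q x|.
Proof.
rewrite -sum1_card -(pair_big_dep P Q (fun _ _ => 1)) /=.
by apply: eq_bigr => i _; rewrite sum1_card.
Qed.

Section Counting.
Variable n : nat.

Lemma card_ord_gt (i : 'I_n) : #|[pred j : 'I_n | i < j]| = n - i.+1.
Proof.
have sum_gt m k : \sum_(j < m) (if k < j then 1 else 0) = m - k.+1.
  elim: m => [|m IH]; first by rewrite big_ord0.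
  by rewrite big_ord_recr /= IH; case: ltnP; lia.
by rewrite -sum1_card big_mkcond sum_gt.
Qed.

Lemma card_ord_lt_pairs : #|[pred p : 'I_n * 'I_n | p.1 < p.2]| = 'C(n, 2).
Proof.
rewrite (@card_pred_pair_dep _ _ predT (fun i j : 'I_n => i < j)).
under eq_bigr => i _ do rewrite card_ord_gt.
rewrite -bin2_sum big_mkord (reindex_inj rev_ord_inj) /=.
by apply: eq_bigr => i _; case: i => i /=; lia.
Qed.

Lemma card_ord_neq2 (i j : 'I_n) : i != j ->
  #|[pred k : 'I_n | (k != i) && (k != j)]| = n - 2.
Proof.
move=> ij; have := cardsC [set i; j]; rewrite cards2 ij card_ord.
have -> : #|~: [set i; j]| = #|[pred k : 'I_n | (k != i) && (k != j)]|.
  by apply: eq_card => k; rewrite !inE negb_or.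
lia.
Qed.

Lemma card_ord_lt_pairs_third :
  #|[pred t : ('I_n * 'I_n) * 'I_n | (t.1.1 < t.1.2) && (t.2 != t.1.1) && (t.2 != t.1.2)]|
  = 'C(n, 2) * (n - 2).
Proof.
pose P (p : 'I_n * 'I_n) := p.1 < p.2.
pose Q (p : 'I_n * 'I_n) (k : 'I_n) := (k != p.1) && (k != p.2).
rewrite (@eq_card _ _ [pred t | P t.1 && Q t.1 t.2]); last by move=> t; rewrite !inE andbA.
rewrite card_pred_pair_dep (eq_bigr (fun _ => n - 2)); last first.
  by move=> p lt_p; rewrite card_ord_neq2 // neq_ltn [_ < _]lt_p.
by rewrite sum_nat_cond_const -card_ord_lt_pairs; congr (_ * _); apply: eq_card => p; rewrite inE.
Qed.

End Counting.

Section Basis.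
Variable n : nat.

Definition pairs := {p : 'I_n * 'I_n | p.1 < p.2}.
Definition triples :=
  {t : ('I_n * 'I_n) * 'I_n | (t.1.1 < t.1.2) && (t.2 != t.1.1) && (t.2 != t.1.2)}.
(* inl (a, b) stands for [l_ab, l_ba], inr (inl (i, j, k)) for [l_ki, l_kj] and
   inr (inr (i, j, k)) for [l_ik, l_jk]. *)
Definition basis := (pairs + (triples + triples))%type.

Lemma card_basis : #|{: basis}| = n * (n - 1) * (2 * n - 3) %/ 2.
Proof.
rewrite !card_sum !card_sig card_ord_lt_pairs card_ord_lt_pairs_third.
have -> : n * (n - 1) = 2 * 'C(n, 2) by rewrite -mul_bin_diag bin1 subn1.
rewrite -mulnA mulKn //; have [n_lt2|n_ge2] := ltnP n 2; first by rewrite bin_small.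
nia.
Qed.

End Basis.

Ltac rewrite_neq := repeat match goal with
  | h : is_true (?x != ?y) |- context [?x == ?y] => rewrite (negbTE h)
  | h : is_true (?x != ?y) |- context [?y == ?x] => rewrite [y == x]eq_sym (negbTE h)
  end; rewrite ?eqxx /=.

Section Coordinates.
Local Open Scope ring_scope.
Variable n : nat.
Implicit Types (bb : basis n) (a b c d i j k : 'I_n).

Definition oriented (f : 'I_n -> 'I_n -> int) a b : int :=
  if (a < b)%N then f a b else - f b a.

Lemma oriented_anti f a b : a != b -> oriented f b a = - oriented f a b.
Proof.
move=> ab; rewrite /oriented; case: ltngtP => [_|_|/val_inj ba]; rewrite ?opprK //.
by rewrite ba eqxx in ab.
Qed.

Definition coef_swap bb :=
  oriented (fun a b => if bb is inl p then Posz (val p == (a, b)) else 0).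
Definition coef_head bb k :=
  oriented (fun i j => if bb is inr (inl t) then Posz (val t == (i, j, k)) else 0).
Definition coef_tail bb k :=
  oriented (fun i j => if bb is inr (inr t) then Posz (val t == (i, j, k)) else 0).

(* The coefficient of bb in [l_ab, l_cd] modulo Gamma_3; the last two cases are the
   triangle relation. *)
Definition pair_coord bb a b c d : int :=
  if (a == d) && (b == c) then coef_swap bb a b
  else if a == c then (if b == d then 0 else coef_head bb a b d)
  else if b == d then coef_tail bb b a c
  else if b == c then - (coef_head bb a b d + coef_tail bb d a b)
  else if a == d then coef_head bb c a b + coef_tail bb b c a
  else 0.

Lemma pair_coord_anti bb a b c d :
  a != b -> c != d -> pair_coord bb c d a b = - pair_coord bb a b c d.
Proof.
move=> ab cd; rewrite /pair_coord /coef_swap /coef_head /coef_tail.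
have [?|ac] := eqVneq a c; have [?|ad] := eqVneq a d;
have [?|bc] := eqVneq b c; have [?|bd] := eqVneq b d; subst;
rewrite ?eqxx in ab cd *; rewrite_neq; try lia; by rewrite oriented_anti // eq_sym.
Qed.

Definition coord bb (g h : vgen n) : int :=
  pair_coord bb (val g).1 (val g).2 (val h).1 (val h).2.

Lemma coord_anti bb g h : coord bb h g = - coord bb g h.
Proof. exact: pair_coord_anti (valP g) (valP h). Qed.

Lemma coord_commuting bb g h :
  uniq [:: (val g).1; (val g).2; (val h).1; (val h).2] -> coord bb g h = 0.
Proof.
rewrite /= !inE !negb_or => /and4P[/and3P[ab ac ad] /andP[bc bd] cd _].
by rewrite /coord /pair_coord; rewrite_neq.
Qed.

Lemma coord_triangle bb x y z :
  uniq [:: (val x).1; (val x).2; (val y).2] ->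
  (val y).1 = (val x).1 -> (val z).1 = (val x).2 -> (val z).2 = (val y).2 ->
  coord bb x y + coord bb x z + coord bb y z = 0.
Proof.
move=> + Ey Ez1 Ez2; rewrite /coord Ey Ez1 Ez2.
move: (val x).1 (val x).2 (val y).2 => k i j.
rewrite /= !inE !negb_or => /and3P[/andP[ki kj] ij _].
by rewrite /pair_coord; rewrite_neq; lia.
Qed.

End Coordinates.

Section CoordinateFunctionals.
Local Open Scope ring_scope.
Variable n : nat.
Implicit Types (bb : basis n) (p : pairs n) (t : triples n) (u v w s : vword n).

Definition mkgen (a b : 'I_n) (ab : a != b) : vgen n := exist _ (a, b) ab.

Lemma pair_neq p : (val p).1 != (val p).2.
Proof. by rewrite neq_ltn (valP p). Qed.
Lemma pair_neq_sym p : (val p).2 != (val p).1.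
Proof. by rewrite eq_sym pair_neq. Qed.
Lemma triple_neq1 t : (val t).2 != (val t).1.1.
Proof. by case/andP: (valP t) => /andP[]. Qed.
Lemma triple_neq2 t : (val t).2 != (val t).1.2.
Proof. by case/andP: (valP t). Qed.
Lemma triple_neq1_sym t : (val t).1.1 != (val t).2.
Proof. by rewrite eq_sym triple_neq1. Qed.
Lemma triple_neq2_sym t : (val t).1.2 != (val t).2.
Proof. by rewrite eq_sym triple_neq2. Qed.

Definition basis_word bb : vword n :=
  match bb with
  | inl p => gcomm (mkgen (pair_neq p)) (mkgen (pair_neq_sym p))
  | inr (inl t) => gcomm (mkgen (triple_neq1 t)) (mkgen (triple_neq2 t))
  | inr (inr t) => gcomm (mkgen (triple_neq1_sym t)) (mkgen (triple_neq2_sym t))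
  end.

Lemma G2_basis_word bb : G2 (basis_word bb).
Proof. by case: bb => [p|[t|t]]; apply: G2_gcomm. Qed.

Definition coordw bb : vword n -> int := quad (upper (coord bb)).

Lemma coordw_relator bb s : vrelator s -> coordw bb s = 0.
Proof.
apply: quad_upper_relator; [exact: coord_anti | exact: coord_commuting | exact: coord_triangle].
Qed.

Lemma coordw_veq bb u v : veq u v -> coordw bb u = coordw bb v.
Proof. apply: quad_veq; [exact: upper_diag | exact: coordw_relator]. Qed.

Lemma coordw_gcomm bb g h : coordw bb (gcomm g h) = coord bb g h.
Proof. exact/quad_upper_gcomm/coord_anti. Qed.

Lemma coordw_basis_word bb b : coordw bb (basis_word b) = Posz (bb == b).
Proof.
case: b => [p|[t|t]]; rewrite coordw_gcomm /coord /=.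
- case: p => [[a b] /= ab]; rewrite /pair_coord !eqxx /= /coef_swap /oriented ab.
  by case: bb => [p|[t|t]] //=; rewrite -val_eqE.
- case: t => [[[i j] k] /= Ht]; have /andP[/andP[ij ki] kj] := Ht.
  have nij : i != j by rewrite neq_ltn ij.
  rewrite /pair_coord; rewrite_neq; rewrite /coef_head /oriented ij.
  by case: bb => [p|[t|t]] //=; rewrite -val_eqE.
- case: t => [[[i j] k] /= Ht]; have /andP[/andP[ij ki] kj] := Ht.
  have nij : i != j by rewrite neq_ltn ij.
  rewrite /pair_coord; rewrite_neq; rewrite /coef_tail /oriented ij.
  by case: bb => [p|[t|t]] //=; rewrite -val_eqE.
Qed.

Lemma coordw_cat bb u v : G2 u -> coordw bb (u ++ v) = coordw bb u + coordw bb v.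
Proof. by move/G2_abel_trivial; apply: quad_cat_trivial. Qed.

Lemma coordw_winv bb u : G2 u -> coordw bb (winv u) = - coordw bb u.
Proof.
move/G2_abel_trivial; apply: quad_winv; [exact: upper_diag | exact: coordw_relator].
Qed.

Lemma coordw_G3 bb u : G3 u -> coordw bb u = 0.
Proof.
apply: quad_G3; [exact: upper_diag | exact: coordw_relator].
Qed.

Lemma coordw_flatten bb (l : seq (vword n)) : (forall w, w \in l -> G2 w) ->
  coordw bb (flatten l) = \sum_(w <- l) coordw bb w.
Proof.
elim: l => [|w l IH] Hl /=; first by rewrite big_nil.
have Hw : G2 w by apply: Hl; rewrite inE eqxx.
by rewrite big_cons coordw_cat // IH // => v Hv; apply: Hl; rewrite inE Hv orbT.
Qed.

Lemma coordw_nseq bb w m : G2 w -> coordw bb (flatten (nseq m w)) = m%:Z * coordw bb w.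
Proof.
move=> Hw; elim: m => [|m IH]; first by rewrite mul0r.
by rewrite /= coordw_cat // IH -[m.+1]add1n PoszD mulrDl mul1r.
Qed.

Lemma coordw_wpow bb w k : G2 w -> coordw bb (wpow w k) = k * coordw bb w.
Proof.
move=> Hw; case: k => m; rewrite /wpow coordw_nseq //; last exact: vgen_inv.
by rewrite coordw_winv // NegzE mulNr mulrN.
Qed.

End CoordinateFunctionals.

Section CoordinateMap.
Local Open Scope ring_scope.
Variable n : nat.
Local Notation r := (n * (n - 1) * (2 * n - 3) %/ 2)%N.
Implicit Types (bb : basis n) (u v w : vword n) (z : 'rV[int]_r).

Definition basis_of_ord (i : 'I_r) : basis n := enum_val (cast_ord (esym (card_basis n)) i).
Definition ord_of_basis bb : 'I_r := cast_ord (card_basis n) (enum_rank bb).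

Lemma ord_of_basisK : cancel ord_of_basis basis_of_ord.
Proof. by move=> bb; rewrite /basis_of_ord /ord_of_basis cast_ordK enum_rankK. Qed.

Lemma basis_of_ordK : cancel basis_of_ord ord_of_basis.
Proof. by move=> i; rewrite /basis_of_ord /ord_of_basis enum_valK cast_ordKV. Qed.

Definition coords w : 'rV[int]_r := \row_i coordw (basis_of_ord i) w.

Lemma coords_nil : coords [::] = 0.
Proof. by apply/rowP => i; rewrite !mxE. Qed.

Lemma coords_cat u v : G2 u -> coords (u ++ v) = coords u + coords v.
Proof. by move=> Hu; apply/rowP => i; rewrite !mxE coordw_cat. Qed.

Lemma coords_winv u : G2 u -> coords (winv u) = - coords u.
Proof. by move=> Hu; apply/rowP => i; rewrite !mxE coordw_winv. Qed.

Lemma coords_veq u v : veq u v -> coords u = coords v.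
Proof. by move=> Huv; apply/rowP => i; rewrite !mxE (coordw_veq _ Huv). Qed.

Lemma coords_G3 u : G3 u -> coords u = 0.
Proof. by move=> Hu; apply/rowP => i; rewrite !mxE coordw_G3. Qed.

Lemma coords_eqG3 u v : G2 u -> G2 v -> eqG3 u v -> coords u = coords v.
Proof.
move=> Hu Hv /coords_G3; rewrite coords_cat // coords_winv //.
by move/eqP; rewrite subr_eq0 => /eqP.
Qed.

Definition basis_prod z : vword n :=
  flatten [seq wpow (basis_word (basis_of_ord i)) (z 0 i) | i <- enum 'I_r].

Lemma G2_basis_prod z : G2 (basis_prod z).
Proof. by apply: G2_flatten => _ /mapP[i _ ->]; apply/G2_wpow/G2_basis_word. Qed.

Lemma coords_basis_prod z : coords (basis_prod z) = z.
Proof.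
apply/rowP => i; rewrite mxE coordw_flatten; last first.
  by move=> _ /mapP[j _ ->]; apply/G2_wpow/G2_basis_word.
have coordw_factor j :
    coordw (basis_of_ord i) (wpow (basis_word (basis_of_ord j)) (z 0 j)) = z 0 j * (i == j)%:Z.
  rewrite coordw_wpow; last exact: G2_basis_word.
  by rewrite coordw_basis_word (can_eq basis_of_ordK).
rewrite big_map big_enum /= (bigD1 i) //= big1 => [|j ji].
  by rewrite coordw_factor eqxx mulr1 addr0.
by rewrite coordw_factor eq_sym (negbTE ji) mulr0.
Qed.

End CoordinateMap.

Lemma flatten_map_pred1 (I : eqType) (T : Type) (F : I -> seq T) (l : seq I) c :
  uniq l -> c \in l -> (forall i, i != c -> F i = [::]) -> flatten (map F l) = F c.
Proof.
move=> ul cl F0; have -> : F c = flatten (map F [:: c]) by rewrite /= cats0.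
rewrite -(filter_pred1_uniq ul cl); elim: l {ul cl} => //= i l ->.
by case: eqP => [->|/eqP/F0 ->].
Qed.

Section Kernel.
Local Open Scope ring_scope.
Variable n : nat.
Local Notation r := (n * (n - 1) * (2 * n - 3) %/ 2)%N.
Implicit Types (bb : basis n) (u v : vword n) (x y : vletter n) (z : 'rV[int]_r) (g h : vgen n).

Lemma flatten_map_veq (I : Type) (F G : I -> vword n) (l : seq I) :
  (forall i, veq (F i) (G i)) -> veq (flatten (map F l)) (flatten (map G l)).
Proof. by move=> FG; elim: l => //= i l ->; rewrite FG. Qed.

Lemma flatten_map_cat (I : Type) (F G : I -> vword n) (l : seq I) :
  (forall i, G2 (G i)) ->
  eqG3 (flatten [seq F i ++ G i | i <- l]) (flatten (map F l) ++ flatten (map G l)).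
Proof.
move=> G2G; elim: l => //= i l ->; rewrite -!catA; apply: eqG3_catl.
by rewrite !catA; apply: eqG3_catr; apply: G2_central.
Qed.

Lemma basis_prod_add z1 z2 : eqG3 (basis_prod (z1 + z2)) (basis_prod z1 ++ basis_prod z2).
Proof.
rewrite /basis_prod -flatten_map_cat => [|i]; last exact/G2_wpow/G2_basis_word.
by apply: veq_eqG3; apply: flatten_map_veq => i; rewrite mxE wpow_add.
Qed.

Lemma basis_prod0 : basis_prod (0 : 'rV[int]_r) = [::].
Proof. by rewrite /basis_prod; elim: (enum _) => //= i l ->; rewrite mxE. Qed.

Lemma basis_prod_opp z : eqG3 (basis_prod (- z)) (winv (basis_prod z)).
Proof. by apply: eqG3_cat_nil; rewrite -basis_prod_add subrr basis_prod0. Qed.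

Lemma basis_prod_delta bb : basis_prod (delta_mx 0 (ord_of_basis bb)) = basis_word bb.
Proof.
rewrite /basis_prod (@flatten_map_pred1 _ _ _ _ (ord_of_basis bb)) ?enum_uniq ?mem_enum //.
  by rewrite mxE !eqxx ord_of_basisK /= cats0.
by move=> i /negbTE ib; rewrite mxE ib andbF.
Qed.

Definition represented u := G2 u /\ eqG3 u (basis_prod (coords u)).

Lemma represented_cat u v : represented u -> represented v -> represented (u ++ v).
Proof.
move=> [Hu Ru] [Hv Rv]; split; first exact: vgen_mul.
by rewrite coords_cat // basis_prod_add -Ru -Rv.
Qed.

Lemma represented_winv u : represented u -> represented (winv u).
Proof.
move=> [Hu Ru]; split; first exact: vgen_inv.
by rewrite coords_winv // basis_prod_opp -Ru.
Qed.

Lemma represented_eqG3 u v : G2 v -> eqG3 u v -> represented u -> represented v.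
Proof. by move=> Hv Huv [Hu Ru]; split; rewrite // -(coords_eqG3 Hu Hv Huv) -Huv. Qed.

Lemma represented_trivial u : veq u [::] -> represented u.
Proof.
move=> Hu; split; first by apply: vgen_eq (vgen_nil _); symmetry.
by rewrite (coords_veq Hu) coords_nil basis_prod0 Hu.
Qed.

Lemma represented_basis_word bb : represented (basis_word bb).
Proof.
split; first exact: G2_basis_word.
by rewrite -basis_prod_delta coords_basis_prod.
Qed.

Lemma represented_rev g h : represented (gcomm h g) -> represented (gcomm g h).
Proof. by rewrite -winv_gcomm => /represented_winv; rewrite winvK. Qed.

Lemma represented_gcomm_swap a b (ab : a != b) (ba : b != a) :
  represented (gcomm (mkgen ab) (mkgen ba)).
Proof.
wlog lt_ab : a b ab ba / (a < b)%N.
  move=> Hwlog; have [/Hwlog //|le_ba] := ltnP a b.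
  by apply/represented_rev/Hwlog; rewrite ltn_neqAle val_eqE ba le_ba.
have -> : gcomm (mkgen ab) (mkgen ba) = basis_word (inl (exist _ (a, b) lt_ab)).
  by congr gcomm; apply: val_inj.
exact: represented_basis_word.
Qed.

Lemma represented_gcomm_head k i j (ki : k != i) (kj : k != j) :
  i != j -> represented (gcomm (mkgen ki) (mkgen kj)).
Proof.
move=> ij; wlog lt_ij : i j ki kj ij / (i < j)%N.
  move=> Hwlog; have [lt_ij|le_ji] := ltnP i j; first exact: Hwlog.
  apply/represented_rev/Hwlog; first by rewrite eq_sym.
  by rewrite ltn_neqAle val_eqE eq_sym ij le_ji.
have Ht : (i < j)%N && (k != i) && (k != j) by rewrite lt_ij ki kj.
have -> : gcomm (mkgen ki) (mkgen kj) = basis_word (inr (inl (exist _ (i, j, k) Ht))).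
  by congr gcomm; apply: val_inj.
exact: represented_basis_word.
Qed.

Lemma represented_gcomm_tail i j k (ik : i != k) (jk : j != k) :
  i != j -> represented (gcomm (mkgen ik) (mkgen jk)).
Proof.
move=> ij; wlog lt_ij : i j ik jk ij / (i < j)%N.
  move=> Hwlog; have [lt_ij|le_ji] := ltnP i j; first exact: Hwlog.
  apply/represented_rev/Hwlog; first by rewrite eq_sym.
  by rewrite ltn_neqAle val_eqE eq_sym ij le_ji.
have Ht : (i < j)%N && (k != i) && (k != j) by rewrite lt_ij eq_sym ik eq_sym jk.
have -> : gcomm (mkgen ik) (mkgen jk) = basis_word (inr (inr (exist _ (i, j, k) Ht))).
  by congr gcomm; apply: val_inj.
exact: represented_basis_word.
Qed.

Lemma represented_gcomm_chain k i j (ki : k != i) (ij : i != j) :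
  k != j -> represented (gcomm (mkgen ki) (mkgen ij)).
Proof.
move=> kj; set x := mkgen ki; set y := mkgen kj; set z := mkgen ij.
have relator : veq [:: pos x; pos y; pos z] [:: pos z; pos y; pos x].
  apply/veq_catV1/veq_relator; right; exists x, y, z.
  by rewrite /= !inE negb_or ki kj ij.
have triangle : eqG3 (gcomm z y ++ gcomm z x ++ gcomm y x) [::].
  apply: (@eqG3_cancel_l _ [:: pos x; pos y; pos z]).
  rewrite /=; symmetry.
  by have := eqG3_rev3 [:: pos x] [:: pos y] [:: pos z]; rewrite /= -relator; exact.
apply/represented_rev/(represented_eqG3 (G2_gcomm z x)).
  by symmetry; apply: eqG3_cat3_nil triangle.
apply: represented_cat; apply: represented_winv.
- by apply: represented_gcomm_tail; rewrite eq_sym.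
- by apply: represented_gcomm_head; rewrite eq_sym.
Qed.

Lemma represented_commuting g h :
  veq [:: pos g; pos h] [:: pos h; pos g] -> represented (gcomm g h).
Proof. by move=> gh; apply/represented_trivial/vcomm_commute. Qed.

Lemma represented_gcomm g h : represented (gcomm g h).
Proof.
case: g h => [[a b] ab] [[c d] cd] /=.
have [ad|ad] := eqVneq a d; have [bc|bc] := eqVneq b c; subst.
- exact: represented_gcomm_swap.
- by apply/represented_rev/represented_gcomm_chain; rewrite eq_sym.
- exact: represented_gcomm_chain.
have [ac|ac] := eqVneq a c; have [bd|bd] := eqVneq b d; subst.
- by rewrite (eq_irrelevance cd ab); apply: represented_commuting.
- exact: represented_gcomm_head.
- exact: represented_gcomm_tail.
- apply/represented_commuting/veq_catV1/veq_relator; left; exists (mkgen ab), (mkgen cd).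
  by rewrite /= !inE !negb_or ab ac ad bc bd cd.
Qed.

Lemma represented_linvl x b :
  represented (vcomm [:: x] b) -> represented (vcomm [:: linv x] b).
Proof.
move/represented_winv; apply: represented_eqG3; first exact: G2_vcomm.
by symmetry; apply: vcomm_linvl.
Qed.

Lemma represented_linvr a y :
  represented (vcomm a [:: y]) -> represented (vcomm a [:: linv y]).
Proof.
move/represented_winv; apply: represented_eqG3; first exact: G2_vcomm.
by symmetry; apply: vcomm_linvr.
Qed.

Lemma represented_letters x y : represented (vcomm [:: x] [:: y]).
Proof.
have pos_l g y' : represented (vcomm [:: pos g] [:: y']).
  case: y' => h [] /=; first exact: represented_gcomm.
  by apply: (represented_linvr (y := pos h)); apply: represented_gcomm.
case: x => g [] /=; first exact: pos_l.
by apply: (represented_linvl (x := pos g)); apply: pos_l.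
Qed.

Lemma represented_vcomm a b : represented (vcomm a b).
Proof.
elim: a => [|x a IHa]; first exact/represented_trivial/vcomm_nill.
apply: (represented_eqG3 (G2_vcomm _ _) (symmetry (vcomm_catl [:: x] a b))).
apply: represented_cat IHa => {a}.
elim: b => [|y b IHb]; first exact/represented_trivial/vcomm_nilr.
apply: (represented_eqG3 (G2_vcomm _ _) (symmetry (vcomm_catr [:: x] [:: y] b))).
apply: represented_cat IHb _.
exact: represented_letters.
Qed.

Lemma G2_represented u : G2 u -> represented u.
Proof.
elim=> {u} [_ [a [b [_ ->]]]||u v _ Ru _ Rv|u _ Ru|u v Huv Hu Ru].
- exact: represented_vcomm.
- exact: represented_trivial.
- exact: represented_cat.
- exact: represented_winv.
- by apply: represented_eqG3 Ru; [apply: vgen_eq Hu | apply: veq_eqG3].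
Qed.

Lemma G3_coords_eq0 u : G2 u -> coords u = 0 -> G3 u.
Proof. by case/G2_represented => _ + u0; rewrite u0 basis_prod0 eqG3_G3. Qed.

End Kernel.

Theorem proposition5p7 (n : nat) : 3 <= n ->
  G2modG3_free_of_rank n (n * (n - 1) * (2 * n - 3) %/ 2).
Proof.
move=> _; rewrite /G2modG3_free_of_rank Gamma2E Gamma3E.
exists (@coords n); split; [|split].
- by move=> u v Hu _; apply: coords_cat.
- by move=> z; exists (basis_prod z); split; [apply: G2_basis_prod | apply: coords_basis_prod].
- by move=> u Hu; split; [apply: G3_coords_eq0 | apply: coords_G3].
Qed.
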